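(* Let $X$ be a uniformly convex and uniformly smooth Banach space, $D_0$ a dislocation group on $X$ and $D\subset D_0$. Let $(u_k)\subset X$ be bounded and suppose there are sequences $(g_k^{(1)}),(g_k^{(2)})\subset D$ and elements $w^{(1)},w^{(2)}\in X$ with $(g_k^{(1)})^{-1}u_k\rightharpoondown w^{(1)}$ and $(g_k^{(2)})^{-1}(u_k-g_k^{(1)}w^{(1)})\rightharpoondown w^{(2)}\ne0$. Then $(g_k^{(1)})^{-1}g_k^{(2)}\rightharpoonup0$.
   Context: Δ-convergence: $x_k\rightharpoondown x$ if for every $y\in X$, $\limsup_k(\|x_k-x\|-\|x_k-y\|)\le0$. Operator convergence $g_k\rightharpoonup g$: $g_kx\rightharpoonup gx$ weakly for all $x$; strong convergence: $g_kx\to gx$ in norm for all $x$. A group $D_0$ of bijective linear isometries of $X$ is a dislocation group if: $(\ast)$ whenever $(g_k)\subset D_0$ and $g_k\not\rightharpoonup0$, some subsequence has both $(g_{k_j})$ and $(g_{k_j}^{-1})$ strongly convergent; and $(\ast\ast)$ whenever $u_k\rightharpoondown0$, $w\in X$, $(g_k)\subset D_0$, $g_k\rightharpoonup0$, then $u_k+g_kw\rightharpoondown0$. *)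

From Stdlib Require Export Reals.
Open Scope R_scope.

Record NormedSpace := {
  car :> Type;
  zero : car;
  add : car -> car -> car;
  opp : car -> car;
  scal : R -> car -> car;
  norm : car -> R;
  add_assoc : forall x y z, add x (add y z) = add (add x y) z;
  add_comm : forall x y, add x y = add y x;
  add_zero : forall x, add x zero = x;
  add_opp : forall x, add x (opp x) = zero;
  scal_assoc : forall a b x, scal a (scal b x) = scal (a * b) x;
  scal_one : forall x, scal 1 x = x;
  scal_add_r : forall a x y, scal a (add x y) = add (scal a x) (scal a y);
  scal_add_l : forall a b x, scal (a + b) x = add (scal a x) (scal b x);
  norm_eq0 : forall x, norm x = 0 <-> x = zero;
  norm_triangle : forall x y, norm (add x y) <= norm x + norm y;
  norm_scal : forall a x, norm (scal a x) = Rabs a * norm x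
}.

Arguments zero {_}.
Arguments add {_}.
Arguments opp {_}.
Arguments scal {_}.
Arguments norm {_}.

Section Defs.
Variable X : NormedSpace.

Definition sub (x y : X) : X := add x (opp y).

Definition cv_strong (u : nat -> X) (x : X) : Prop :=
  forall eps, 0 < eps -> exists N, forall k, (N <= k)%nat -> norm (sub (u k) x) < eps.

Definition cauchy (u : nat -> X) : Prop :=
  forall eps, 0 < eps -> exists N, forall m n, (N <= m)%nat -> (N <= n)%nat ->
    norm (sub (u m) (u n)) < eps.

Definition banach : Prop := forall u : nat -> X, cauchy u -> exists x, cv_strong u x.

Definition linear_functional (f : X -> R) : Prop :=
  (forall x y, f (add x y) = f x + f y) /\ (forall a x, f (scal a x) = a * f x).

Definition bounded_functional (f : X -> R) : Prop :=
  exists C, forall x, Rabs (f x) <= C * norm x.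

Definition weak_cv (u : nat -> X) (x : X) : Prop :=
  forall f, linear_functional f -> bounded_functional f ->
    Un_cv (fun k => f (u k)) (f x).

(* Delta-convergence: for every y, limsup_k (||u_k - x|| - ||u_k - y||) <= 0,
   written out as: for every eps > 0 the terms are eventually <= eps. *)
Definition delta_cv (u : nat -> X) (x : X) : Prop :=
  forall y eps, 0 < eps -> exists N, forall k, (N <= k)%nat ->
    norm (sub (u k) x) - norm (sub (u k) y) <= eps.

Definition uniformly_convex : Prop :=
  forall eps, 0 < eps -> exists delta, 0 < delta /\
    forall x y : X, norm x <= 1 -> norm y <= 1 -> eps <= norm (sub x y) ->
      norm (scal (/ 2) (add x y)) <= 1 - delta.

(* rho(tau)/tau -> 0 as tau -> 0+, where rho is the modulus of smoothness
   rho(tau) = sup {(||x + tau y|| + ||x - tau y||)/2 - 1 : ||x|| = ||y|| = 1}. *)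
Definition uniformly_smooth : Prop :=
  forall eps, 0 < eps -> exists tau0, 0 < tau0 /\
    forall tau, 0 < tau -> tau < tau0 ->
      forall x y : X, norm x = 1 -> norm y = 1 ->
        (norm (add x (scal tau y)) + norm (sub x (scal tau y))) / 2 - 1 <= eps * tau.

Definition linear_op (g : X -> X) : Prop :=
  (forall x y, g (add x y) = add (g x) (g y)) /\ (forall a x, g (scal a x) = scal a (g x)).

Definition isometry (g : X -> X) : Prop := forall x, norm (g x) = norm x.

Definition inverse_of (h g : X -> X) : Prop := forall x, h (g x) = x /\ g (h x) = x.

Definition op_weak_cv (g : nat -> X -> X) (G : X -> X) : Prop :=
  forall x, weak_cv (fun k => g k x) (G x).

Definition op_strong_convergent (g : nat -> X -> X) : Prop :=
  exists G : X -> X, forall x, cv_strong (fun k => g k x) (G x).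

Definition isometry_group (D0 : (X -> X) -> Prop) : Prop :=
  (forall g, D0 g -> linear_op g /\ isometry g /\ exists h, inverse_of h g) /\
  D0 (fun x => x) /\
  (forall g1 g2, D0 g1 -> D0 g2 -> D0 (fun x => g1 (g2 x))) /\
  (forall g h, D0 g -> inverse_of h g -> D0 h).

Definition dislocation_group (D0 : (X -> X) -> Prop) : Prop :=
  isometry_group D0 /\
  (forall g h : nat -> X -> X, (forall k, D0 (g k)) -> (forall k, inverse_of (h k) (g k)) ->
     ~ op_weak_cv g (fun _ => zero) ->
     exists phi : nat -> nat, (forall j, (phi j < phi (S j))%nat) /\
       op_strong_convergent (fun j => g (phi j)) /\
       op_strong_convergent (fun j => h (phi j))) /\
  (forall (u : nat -> X) (w : X) (g : nat -> X -> X),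
     delta_cv u zero -> (forall k, D0 (g k)) -> op_weak_cv g (fun _ => zero) ->
     delta_cv (fun k => add (u k) (g k w)) zero).

End Defs.

Arguments sub {X}.
Arguments cv_strong {X}.
Arguments weak_cv {X}.
Arguments delta_cv {X}.
Arguments inverse_of {X}.
Arguments op_weak_cv {X}.
Arguments op_strong_convergent {X}.
Arguments dislocation_group {X}.

(* If [(h1_k g2_k)] does not tend weakly to 0, property ( * ) of dislocation
   groups yields a subsequence along which [a_k := h1_k g2_k] converges
   strongly, say [a_k (w2/2) -> p].  Transporting norms by the isometries,
   [s_k := h2_k (u_k - g1_k w1)] satisfies
   [||s_k - y|| = ||z_k - a_k y||] with [z_k := h1_k u_k - w1].  Testing the
   Delta-convergence of [h1_k u_k] against [w1 + p] and that of [s_k] against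
   [w2/2] shows that [||s_k||] and [||s_k - w2||] eventually exceed
   [||s_k - w2/2||] by arbitrarily little at most, which uniform convexity forbids
   since [s_k] and [s_k - w2] stay at the fixed distance [||w2|| > 0]. *)

From Stdlib Require Import Reals Lra Lia Classical.
Open Scope R_scope.

Section VectorAlgebra.
Variable X : NormedSpace.
Implicit Types x y z w : X.

Lemma add_zero_l x : add zero x = x.
Proof. rewrite add_comm; apply add_zero. Qed.

Lemma add_reg_l x y z : add x y = add x z -> y = z.
Proof.
  intro H.
  rewrite <- (add_zero_l y), <- (add_zero_l z).
  rewrite <- (add_opp X x), (add_comm X x (opp x)), <- !add_assoc, H; reflexivity.
Qed.

Lemma scal_zero_l x : scal 0 x = zero.
Proof.
  apply (add_reg_l (scal 0 x)).
  rewrite <- scal_add_l, Rplus_0_l, add_zero; reflexivity.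
Qed.

Lemma opp_scal_m1 x : opp x = scal (-1) x.
Proof.
  apply (add_reg_l x). rewrite add_opp.
  rewrite <- (scal_one X x) at 1. rewrite <- scal_add_l.
  replace (1 + -1) with 0 by ring. symmetry; apply scal_zero_l.
Qed.

Lemma scal_zero_r (r : R) : scal r (@zero X) = zero.
Proof. rewrite <- (scal_zero_l zero), scal_assoc, Rmult_0_r; reflexivity. Qed.

Lemma opp_zero : opp (@zero X) = zero.
Proof. rewrite opp_scal_m1; apply scal_zero_r. Qed.

Lemma opp_add x y : opp (add x y) = add (opp x) (opp y).
Proof. rewrite !opp_scal_m1; apply scal_add_r. Qed.

Lemma opp_opp x : opp (opp x) = x.
Proof.
  rewrite !opp_scal_m1, scal_assoc. replace (-1 * -1) with 1 by ring. apply scal_one.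
Qed.

Lemma scal_opp (r : R) x : scal r (opp x) = opp (scal r x).
Proof. rewrite !opp_scal_m1, !scal_assoc, Rmult_comm; reflexivity. Qed.

Lemma scal_sub (r : R) x y : scal r (sub x y) = sub (scal r x) (scal r y).
Proof. unfold sub; rewrite scal_add_r, scal_opp; reflexivity. Qed.

Lemma sub_zero_r x : sub x zero = x.
Proof. unfold sub; rewrite opp_zero; apply add_zero. Qed.

Lemma sub_sub x y z : sub (sub x y) z = sub x (add y z).
Proof. unfold sub; rewrite opp_add, add_assoc; reflexivity. Qed.

Lemma sub_sub_cancel x y : sub x (sub x y) = y.
Proof. unfold sub; rewrite opp_add, opp_opp, add_assoc, add_opp; apply add_zero_l. Qed.

Lemma add_sub_sub x y z : add (sub x y) (sub y z) = sub x z.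
Proof.
  unfold sub. rewrite <- add_assoc. f_equal.
  rewrite add_assoc, (add_comm X (opp y) y), add_opp; apply add_zero_l.
Qed.

Lemma midpoint_sub x w : scal (/2) (add x (sub x w)) = sub x (scal (/2) w).
Proof.
  unfold sub. rewrite add_assoc, !scal_add_r, <- scal_add_l, scal_opp.
  replace (/2 + /2) with 1 by field. rewrite scal_one; reflexivity.
Qed.

Lemma norm_opp x : norm (opp x) = norm x.
Proof.
  rewrite opp_scal_m1, norm_scal. replace (Rabs (-1)) with 1 by (rewrite Rabs_left; lra).
  ring.
Qed.

Lemma norm_zero : norm (@zero X) = 0.
Proof. apply norm_eq0; reflexivity. Qed.

Lemma norm_nonneg x : 0 <= norm x.
Proof.
  assert (H := norm_triangle X x (opp x)).
  rewrite add_opp, norm_opp, norm_zero in H. lra.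
Qed.

Lemma norm_pos x : x <> zero -> 0 < norm x.
Proof.
  intro Hx. destruct (Rle_lt_or_eq_dec _ _ (norm_nonneg x)) as [|H]; auto.
  exfalso; apply Hx, norm_eq0; auto.
Qed.

Lemma norm_scal_nonneg (r : R) x : 0 <= r -> norm (scal r x) = r * norm x.
Proof. intro Hr; rewrite norm_scal, Rabs_right; lra. Qed.

Lemma norm_sub_le x y : norm (sub x y) <= norm x + norm y.
Proof. unfold sub. rewrite <- (norm_opp y). apply norm_triangle. Qed.

Lemma norm_sub_triangle x y z : norm (sub x z) <= norm (sub x y) + norm (sub y z).
Proof. rewrite <- (add_sub_sub x y z). apply norm_triangle. Qed.

End VectorAlgebra.

Section Isometries.
Variable X : NormedSpace.
Implicit Types g h : X -> X.

Lemma isometry_zero g : isometry X g -> g zero = zero.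
Proof. intro Hg. apply norm_eq0. rewrite Hg; apply norm_zero. Qed.

Lemma isometry_inverse g h : isometry X g -> inverse_of h g -> isometry X h.
Proof. intros Hg Hhg x. rewrite <- Hg, (proj2 (Hhg x)); reflexivity. Qed.

Lemma linear_sub g x y : linear_op X g -> g (sub x y) = sub (g x) (g y).
Proof. intros [Ha Hs]. unfold sub. rewrite Ha, !opp_scal_m1, Hs; reflexivity. Qed.

Lemma inverse_of_sym g h : inverse_of h g -> inverse_of g h.
Proof. intros H x; split; apply H. Qed.

Lemma inverse_of_comp g1 g2 h1 h2 :
  inverse_of h1 g1 -> inverse_of h2 g2 ->
  inverse_of (fun x => h2 (h1 x)) (fun x => g1 (g2 x)).
Proof.
  intros H1 H2 x; split.
  - rewrite (proj1 (H1 _)), (proj1 (H2 _)); reflexivity.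
  - rewrite (proj2 (H2 _)), (proj2 (H1 _)); reflexivity.
Qed.

(* Both sides are norms of isometric images of [x - g1 w - g2 y]. *)
Lemma norm_sub_conjugate g1 g2 h1 h2 x w y :
  linear_op X g1 -> isometry X g1 -> linear_op X g2 -> isometry X g2 ->
  inverse_of h1 g1 -> inverse_of h2 g2 ->
  norm (sub (h2 (sub x (g1 w))) y) = norm (sub (sub (h1 x) w) (h1 (g2 y))).
Proof.
  intros Hl1 Hs1 Hl2 Hs2 Hi1 Hi2.
  rewrite <- (Hs2 (sub (h2 _) y)), <- (Hs1 (sub (sub (h1 x) w) _)).
  rewrite (linear_sub g2), !(linear_sub g1) by assumption.
  rewrite (proj2 (Hi2 _)), (proj2 (Hi1 _)), (proj2 (Hi1 _)); reflexivity.
Qed.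

End Isometries.

Lemma delta_cv_subseq (X : NormedSpace) (u : nat -> X) (x : X) (phi : nat -> nat) :
  (forall j, (phi j < phi (S j))%nat) -> delta_cv u x -> delta_cv (fun j => u (phi j)) x.
Proof.
  intros Hphi Hu y eps Heps. destruct (Hu y eps Heps) as [N HN].
  assert (Hge : forall j, (j <= phi j)%nat).
  { induction j; [lia | specialize (Hphi j); lia]. }
  exists N; intros j Hj. apply HN. specialize (Hge j); lia.
Qed.

Section UniformConvexity.
Variable X : NormedSpace.
Hypothesis Huc : uniformly_convex X.

Lemma uniformly_convex_scaled eps : 0 < eps -> exists delta, 0 < delta /\
  forall (r : R) (x y : X), 0 < r -> norm x <= r -> norm y <= r ->
    eps * r <= norm (sub x y) -> norm (scal (/2) (add x y)) <= (1 - delta) * r.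
Proof.
  intro Heps. destruct (Huc eps Heps) as [delta [Hdelta Hxy]].
  exists delta; split; [exact Hdelta|]. intros r x y Hr Hx Hy Hd.
  assert (Hir : 0 < / r) by (apply Rinv_0_lt_compat; lra).
  assert (Hn : forall v : X, norm (scal (/ r) v) = / r * norm v)
    by (intro v; apply norm_scal_nonneg; lra).
  assert (Hle1 : forall t, t <= r -> / r * t <= 1).
  { intros t Ht. rewrite <- (Rinv_l r) by lra. apply Rmult_le_compat_l; lra. }
  specialize (Hxy (scal (/ r) x) (scal (/ r) y)).
  rewrite <- scal_sub, <- scal_add_r, scal_assoc, Rmult_comm, <- scal_assoc, !Hn in Hxy.
  assert (Hmid : / r * norm (scal (/ 2) (add x y)) <= 1 - delta).
  { apply Hxy; try (apply Hle1; assumption).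
    apply (Rmult_le_reg_l r); [lra|].
    rewrite <- Rmult_assoc, Rinv_r, Rmult_1_l by lra. lra. }
  apply (Rmult_le_compat_l r) in Hmid; [|lra].
  rewrite <- Rmult_assoc, Rinv_r, Rmult_1_l in Hmid by lra. lra.
Qed.

Lemma uniformly_convex_midpoint_gap (w : X) (B : R) : w <> zero -> exists eps, 0 < eps /\
  forall s : X, norm s <= B ->
    norm (sub s (scal (/2) w)) + eps < Rmax (norm s) (norm (sub s w)).
Proof.
  intro Hw. set (d := norm w). assert (Hd : 0 < d) by (apply norm_pos, Hw).
  set (R0 := Rabs B + d). assert (HR0 : 0 < R0) by (unfold R0; pose proof (Rabs_pos B); lra).
  destruct (uniformly_convex_scaled (d / R0)) as [delta [Hdelta Hmid]].
  { apply Rdiv_lt_0_compat; lra. }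
  exists (delta * d / 4); split; [nra|]. intros s Hs.
  set (rho := Rmax (norm s) (norm (sub s w))).
  assert (Hs_rho := Rmax_l (norm s) (norm (sub s w))).
  assert (Hsw_rho := Rmax_r (norm s) (norm (sub s w))). fold rho in Hs_rho, Hsw_rho.
  assert (Hd_rho : d <= 2 * rho).
  { assert (H := norm_sub_le _ s (sub s w)). rewrite sub_sub_cancel in H. fold d in H. lra. }
  assert (Hrho_R0 : rho <= R0).
  { assert (norm (sub s w) <= norm s + d) by apply norm_sub_le.
    pose proof (Rle_abs B).
    unfold rho; apply Rmax_lub; unfold R0; lra. }
  specialize (Hmid rho s (sub s w) ltac:(lra) Hs_rho Hsw_rho).
  rewrite sub_sub_cancel, midpoint_sub in Hmid.
  assert (d / R0 * rho <= d).
  { assert (Hinv : / R0 * R0 = 1) by (apply Rinv_l; lra).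
    assert (0 < / R0) by (apply Rinv_0_lt_compat; lra).
    assert (0 <= d * / R0 * (R0 - rho)) by (apply Rmult_le_pos; nra).
    unfold Rdiv. nra. }
  assert (norm (sub s (scal (/2) w)) <= (1 - delta) * rho) by (apply Hmid; fold d; lra).
  nra.
Qed.

(* [s_k] plays the role of [h2_k (u_k - g1_k w1)] and [v_k] that of [h1_k u_k];
   [a_k] is the conjugate [h1_k g2_k] along a strongly convergent subsequence. *)
Lemma no_strongly_convergent_conjugate (v s : nat -> X) (a : nat -> X -> X)
    (w1 w2 p : X) (B : R) :
  (forall k y, norm (sub (s k) y) = norm (sub (sub (v k) w1) (a k y))) ->
  (forall k, a k zero = zero) ->
  (forall k, norm (s k) <= B) ->
  delta_cv v w1 -> delta_cv s w2 -> w2 <> zero ->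
  ~ cv_strong (fun k => a k (scal (/2) w2)) p.
Proof.
  intros Htransfer Ha0 Hbound Hv Hs Hw2 Ha.
  set (m := scal (/2) w2).
  destruct (uniformly_convex_midpoint_gap w2 B Hw2) as [eps [Heps Hgap]].
  destruct (Hv (add w1 p) (eps / 2)) as [N1 HN1]; [lra|].
  destruct (Ha (eps / 2)) as [N2 HN2]; [lra|].
  destruct (Hs m eps Heps) as [N3 HN3].
  set (k := max N1 (max N2 N3)).
  specialize (HN1 k ltac:(lia)). specialize (HN2 k ltac:(lia)). specialize (HN3 k ltac:(lia)).
  specialize (Hgap (s k) (Hbound k)). fold m in Hgap.
  rewrite <- sub_sub in HN1. cbv beta in HN1, HN2. fold m in HN2.
  assert (Hs_z : norm (s k) = norm (sub (v k) w1)).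
  { rewrite <- (sub_zero_r _ (s k)), Htransfer, Ha0, sub_zero_r; reflexivity. }
  assert (Hsm := Htransfer k m).
  assert (Htri := norm_sub_triangle _ (sub (v k) w1) (a k m) p).
  assert (Rmax (norm (s k)) (norm (sub (s k) w2)) <= norm (sub (s k) m) + eps)
    by (apply Rmax_lub; lra).
  lra.
Qed.

End UniformConvexity.

Theorem lemma5p8 (X : NormedSpace) (D0 D : (X -> X) -> Prop) (u : nat -> X)
  (g1 g2 h1 h2 : nat -> X -> X) (w1 w2 : X) :
  banach X -> uniformly_convex X -> uniformly_smooth X ->
  dislocation_group D0 ->
  (forall g, D g -> D0 g) ->
  (exists M, forall k, norm (u k) <= M) ->
  (forall k, D (g1 k)) -> (forall k, D (g2 k)) ->
  (forall k, inverse_of (h1 k) (g1 k)) ->   (* h1 k = (g1 k)^{-1} *)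
  (forall k, inverse_of (h2 k) (g2 k)) ->   (* h2 k = (g2 k)^{-1} *)
  delta_cv (fun k => h1 k (u k)) w1 ->
  delta_cv (fun k => h2 k (sub (u k) (g1 k w1))) w2 ->
  w2 <> zero ->
  op_weak_cv (fun k x => h1 k (g2 k x)) (fun _ => zero).
Proof.
  intros _ Huc _ [[Hgrp [_ [Hcomp Hinv]]] [Hstar _]] HD [M HM] Hg1 Hg2 Hi1 Hi2 Hv Hs Hw2.
  assert (Hlin : forall g, D g -> linear_op X g /\ isometry X g)
    by (intros g Hg; destruct (Hgrp g (HD g Hg)) as [? [? _]]; auto).
  apply NNPP; intro Hnot.
  destruct (Hstar (fun k x => h1 k (g2 k x)) (fun k x => h2 k (g1 k x)))
    as [phi [Hphi [[G HG] _]]]; [| | exact Hnot|].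
  - intro k. apply Hcomp; [apply (Hinv (g1 k)) | apply HD]; auto.
  - intro k. apply inverse_of_comp; [apply inverse_of_sym|]; auto.
  - assert (Hconj : forall k y, norm (sub (h2 k (sub (u k) (g1 k w1))) y)
                      = norm (sub (sub (h1 k (u k)) w1) (h1 k (g2 k y))))
      by (intros k y; destruct (Hlin _ (Hg1 k)), (Hlin _ (Hg2 k));
          apply norm_sub_conjugate; auto).
    assert (Hh1 : forall k, isometry X (h1 k))
      by (intro k; apply (isometry_inverse _ (g1 k)); [apply Hlin|]; auto).
    apply (no_strongly_convergent_conjugate X Huc
             (fun j => h1 (phi j) (u (phi j)))
             (fun j => h2 (phi j) (sub (u (phi j)) (g1 (phi j) w1)))
             (fun j x => h1 (phi j) (g2 (phi j) x)) w1 w2 (G (scal (/2) w2)) (M + norm w1));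
      auto.
    + intros j. rewrite !isometry_zero; [reflexivity | apply Hh1 | apply Hlin, Hg2].
    + intros j. rewrite <- (sub_zero_r _ (h2 _ _)), Hconj, isometry_zero, isometry_zero,
        sub_zero_r by (apply Hh1 || apply Hlin, Hg2).
      eapply Rle_trans; [apply norm_sub_le|]. rewrite Hh1. specialize (HM (phi j)). lra.
    + exact (delta_cv_subseq _ (fun k => h1 k (u k)) _ phi Hphi Hv).
    + exact (delta_cv_subseq _ (fun k => h2 k (sub (u k) (g1 k w1))) _ phi Hphi Hs).
Qed.
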